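(* Let $L:\mathbb{R}^d\setminus\{0\}\to\mathbb{R}$ be twice differentiable and scale invariant, and $\rho:=\max_{\|x\|_2=1}\|\nabla^2L(x)\|_2<\infty$. For any $x\in\mathbb{R}^d\setminus\{0\}$ and $v\in\mathbb{R}^d$ with $\langle x,v\rangle=0$, $$L(x+v)-L(x)\le\langle v,\nabla L(x)\rangle+\frac{\rho\|v\|_2^2}{2\|x\|_2^2}.$$
   Context: Scale invariant means $L(cx)=L(x)$ for all $c>0$ and $x\ne0$. *)

From HB Require Import structures.
From mathcomp Require Import all_boot all_order all_algebra.
From mathcomp Require Import all_classical all_reals all_analysis.
Set Implicit Arguments. Unset Strict Implicit. Unset Printing Implicit Defensive.
Import Order.TTheory GRing.Theory Num.Theory.
Import numFieldNormedType.Exports.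
Local Open Scope classical_set_scope.
Local Open Scope ring_scope.

Definition basis_vec (R : realType) (d : nat) (i : 'I_d) : 'rV[R]_d :=
  delta_mx 0 i.

Definition dotp (R : realType) (d : nat) (x y : 'rV[R]_d) : R :=
  \sum_(i < d) x 0 i * y 0 i.
Definition norm2 (R : realType) (d : nat) (x : 'rV[R]_d) : R :=
  Num.sqrt (dotp x x).

Definition grad (R : realType) (d : nat) (f : 'rV[R]_d -> R) (x : 'rV[R]_d)
  : 'rV[R]_d := \row_i ('D_(basis_vec R i) f x).

Definition hessian (R : realType) (d : nat) (f : 'rV[R]_d -> R) (x : 'rV[R]_d)
  : 'M[R]_d :=
  \matrix_(i, j) ('D_(basis_vec R j) (fun y => grad f y 0 i) x).

Definition opnorm2 (R : realType) (d : nat) (A : 'M[R]_d) : R :=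
  sup [set norm2 (u *m A^T) | u in [set u : 'rV[R]_d | norm2 u = 1]].

Definition scale_invariant (R : realType) (d : nat) (L : 'rV[R]_d -> R) : Prop :=
  forall (c : R) (x : 'rV[R]_d), 0 < c -> x != 0 -> L (c *: x) = L x.

Definition twice_differentiable_punctured (R : realType) (d : nat)
  (L : 'rV[R]_d -> R) : Prop :=
  forall x : 'rV[R]_d, x != 0 -> differentiable L x /\ differentiable (grad L) x.

From HB Require Import structures.
From mathcomp Require Import all_boot all_order all_algebra.
From mathcomp Require Import all_classical all_reals all_analysis.
From mathcomp Require Import ring lra.
Import Order.TTheory GRing.Theory Num.Theory.
Import numFieldNormedType.Exports.
Local Open Scope classical_set_scope.
Local Open Scope ring_scope.

(* Scale invariance makes the Hessian homogeneous of degree -2: differentiating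
   L (c y) = L y twice gives c^2 H(c y) = H(y).  Hence on the segment t |-> x + t v,
   whose points have norm at least ||x|| because v is orthogonal to x, the second
   derivative v^T H(x + t v) v is at most rho ||v||^2 / ||x||^2, and Taylor's
   theorem with this bound on [0, 1] gives the inequality. *)

Section Euclidean.
Context {R : realType} {d : nat}.
Implicit Types (a b c : 'rV[R]_d) (A : 'M[R]_d).

Lemma dotpC a b : dotp a b = dotp b a.
Proof. by apply: eq_bigr => i _; rewrite mulrC. Qed.

Lemma dotpDl a b c : dotp (a + b) c = dotp a c + dotp b c.
Proof. by rewrite /dotp -big_split; apply: eq_bigr => i _; rewrite mxE mulrDl. Qed.

Lemma dotpZl (k : R) a b : dotp (k *: a) b = k * dotp a b.
Proof. by rewrite /dotp mulr_sumr; apply: eq_bigr => i _; rewrite mxE mulrA. Qed.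

Lemma dotpZr (k : R) a b : dotp a (k *: b) = k * dotp a b.
Proof. by rewrite dotpC dotpZl dotpC. Qed.

Lemma dotpNl a b : dotp (- a) b = - dotp a b.
Proof. by rewrite -scaleN1r dotpZl mulN1r. Qed.

Lemma dotp0l a : dotp 0 a = 0.
Proof. by rewrite -(scale0r 0) dotpZl mul0r. Qed.

Lemma dotpp_ge0 a : 0 <= dotp a a.
Proof. by apply: sumr_ge0 => i _; rewrite -expr2 sqr_ge0. Qed.

Lemma dotpp_eq0 a : (dotp a a == 0) = (a == 0).
Proof.
apply/idP/eqP => [|->]; last by rewrite dotp0l.
rewrite psumr_eq0 => [/allP a0|i _]; last by rewrite -expr2 sqr_ge0.
apply/rowP => i; rewrite mxE; have := a0 i (mem_index_enum _).
by rewrite /= mulf_eq0 orbb => /eqP.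
Qed.

Lemma norm2_ge0 a : 0 <= norm2 a.
Proof. exact: sqrtr_ge0. Qed.

Lemma sqr_norm2 a : norm2 a ^+ 2 = dotp a a.
Proof. by rewrite sqr_sqrtr // dotpp_ge0. Qed.

Lemma norm2_eq0 a : (norm2 a == 0) = (a == 0).
Proof. by rewrite /norm2 sqrtr_eq0 le_eqVlt ltNge dotpp_ge0 orbF dotpp_eq0. Qed.

Lemma norm2_gt0 a : a != 0 -> 0 < norm2 a.
Proof. by rewrite lt_def norm2_eq0 norm2_ge0 andbT. Qed.

Lemma norm2Z (k : R) a : norm2 (k *: a) = `|k| * norm2 a.
Proof.
rewrite /norm2 dotpZl dotpC dotpZl mulrA -expr2 sqrtrM ?sqr_ge0 //.
by rewrite sqrtr_sqr.
Qed.

Lemma norm2_normalize a : a != 0 -> norm2 ((norm2 a)^-1 *: a) = 1.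
Proof.
move=> /norm2_gt0 a_gt0.
by rewrite norm2Z gtr0_norm ?invr_gt0 // mulVf // gt_eqF.
Qed.

Lemma dotp_le_norm2 a b : dotp a b <= norm2 a * norm2 b.
Proof.
have [->|a0] := eqVneq a 0; first by rewrite dotp0l mulr_ge0 ?norm2_ge0.
have [->|b0] := eqVneq b 0.
  by rewrite dotpC dotp0l mulr_ge0 ?norm2_ge0.
set al := norm2 a; set be := norm2 b.
have ab_gt0 : 0 < al * be by rewrite mulr_gt0 ?norm2_gt0.
have := dotpp_ge0 (be *: a - al *: b).
rewrite dotpDl dotpNl !dotpZl ![dotp _ (_ - _)]dotpC !dotpDl !dotpNl !dotpZl.
rewrite -!sqr_norm2 -/al -/be (dotpC b a) => sq_ge0.
have : 0 <= al * be * (al * be - dotp a b) by nra.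
by rewrite pmulr_rge0 // subr_ge0.
Qed.

Lemma normr_dotp_le a b : `|dotp a b| <= norm2 a * norm2 b.
Proof.
rewrite ler_norml dotp_le_norm2 andbT lerNl -dotpNl.
by apply: le_trans (dotp_le_norm2 _ _) _; rewrite -scaleN1r norm2Z normrN1 mul1r.
Qed.

Lemma norm2_orthoD a b : dotp a b = 0 ->
  norm2 (a + b) ^+ 2 = norm2 a ^+ 2 + norm2 b ^+ 2.
Proof.
move=> ab0; rewrite !sqr_norm2 dotpDl ![dotp _ (a + b)]dotpC !dotpDl.
by rewrite ab0 dotpC ab0 addr0 add0r.
Qed.

Lemma mulmx_tr_entry A u i : (u *m A^T) 0 i = dotp u (row i A).
Proof. by rewrite !mxE; apply: eq_bigr => j _; rewrite !mxE. Qed.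

Lemma opnorm2_has_ubound A :
  has_ubound [set norm2 (u *m A^T) | u in [set u : 'rV[R]_d | norm2 u = 1]].
Proof.
exists (Num.sqrt (\sum_i norm2 (row i A) ^+ 2)) => _ [u /= u1 <-].
rewrite /norm2 ler_sqrt; last by apply: sumr_ge0 => i _; rewrite sqr_ge0.
apply: ler_sum => i _; rewrite -expr2 mulmx_tr_entry -real_normK ?num_real //.
rewrite lerXn2r ?nnegrE ?normr_ge0 ?norm2_ge0 //.
by apply: le_trans (normr_dotp_le _ _) _; rewrite u1 mul1r.
Qed.

Lemma norm2_mulmx_le A w : norm2 (w *m A^T) <= opnorm2 A * norm2 w.
Proof.
have [->|w0] := eqVneq w 0; first by rewrite mul0mx /norm2 dotp0l sqrtr0 mulr0.
have w_gt0 := norm2_gt0 _ w0.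
have := ub_le_sup (opnorm2_has_ubound A) (ex_intro2 _ _ _ (norm2_normalize _ w0) erefl).
rewrite -scalemxAl norm2Z gtr0_norm ?invr_gt0 // -/(opnorm2 A).
by rewrite ler_pdivrMl // mulrC.
Qed.

Lemma quad_form_le_opnorm2 A v : dotp v (v *m A^T) <= opnorm2 A * norm2 v ^+ 2.
Proof.
apply: le_trans (dotp_le_norm2 _ _) _.
apply: le_trans (ler_wpM2l (norm2_ge0 v) (norm2_mulmx_le _ v)) _.
by rewrite mulrCA -expr2.
Qed.

End Euclidean.

Section Derivatives.
Context {R : realType} {d : nat}.
Notation V := 'rV[R]_d.
Implicit Types (f : V -> R) (a v y : V).

Let line_quotient f a v t :
  (fun h : R => h^-1 *: (((fun s : R => f (a + s *: v)) \o shift t) (h *: 1)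
        - (fun s : R => f (a + s *: v)) t)) =
  (fun h : R => h^-1 *: ((f \o shift (a + t *: v)) (h *: v) - f (a + t *: v))).
Proof.
apply: funext => h /=; congr (_ *: (f _ - _)).
by rewrite /shift /= scalerDl [h *: 1]mulr1 addrCA addrA.
Qed.

Lemma derivable_line f a v t :
  derivable (fun s : R => f (a + s *: v)) t 1 = derivable f (a + t *: v) v.
Proof. by rewrite /derivable line_quotient. Qed.

Lemma derive_line f a v t :
  'D_1 (fun s : R => f (a + s *: v)) t = 'D_v f (a + t *: v).
Proof. by rewrite /derive line_quotient. Qed.

Lemma derive_grad f a v : differentiable f a -> 'D_v f a = dotp v (grad f a).
Proof.
move=> df; rewrite deriveE // {1}(row_sum_delta v) linear_sum.
by apply: eq_bigr => i _; rewrite linearZ /= -deriveE // mxE.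
Qed.

Lemma derive_homog f (c k : R) y e :
  differentiable f y -> differentiable f (c *: y) ->
  (\forall z \near y, f (c *: z) = k * f z) ->
  c * 'D_e f (c *: y) = k * 'D_e f y.
Proof.
move=> dfy dfcy fcz.
have chain : 'D_e (fun z => f (c *: z)) y = 'D_(c *: e) f (c *: y).
  rewrite /derive; congr (lim (_ @ 0^')); apply: funext => h /=.
  by rewrite /shift /=; congr (_ *: (f _ - _)); rewrite scalerDr !scalerA mulrC.
rewrite [RHS]deriveE // linearZ /= -deriveE // (near_eq_derive _ fcz) in chain.
by rewrite -[_ * _]/(c *: _) -chain deriveMl //; exact: diff_derivable.
Qed.

Lemma near_neq0 y : y != 0 -> \forall z \near y, z != 0.
Proof. exact: cvgr_neq0 cvg_id. Qed.

End Derivatives.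

Lemma taylor2_le (R : realType) (f : R -> R) (M : R) :
  (forall t, derivable f t 1) -> (forall t, derivable (derive1 f) t 1) ->
  (forall t, derive1 (derive1 f) t <= M) ->
  f 1 - f 0 <= derive1 f 0 + M / 2.
Proof.
move=> df ddf f2_le.
(* k t = f t - f'(0) t - M t^2 / 2 is nonincreasing on [0, 1]: by the mean value
   theorem for f', k'(t) = f'(t) - f'(0) - M t <= 0. *)
pose a := derive1 f 0; pose k : R -> R := f - a *: id - (M / 2) *: id ^+ 2.
have dk (t : R) : is_derive t 1 k (derive1 f t - a - M * t).
  apply: is_derive_eq; first by apply: is_deriveB; apply: is_deriveB; exact: derivableP.
  by rewrite -derive1E /GRing.scale /= expr1 !mulr1; field.
have [c c01 kc] := MVT ltr01 (fun t _ => dk t)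
  (derivable_within_continuous (fun t _ => (dk t).(ex_derive))).
have [c_gt0 _] : 0 < c /\ c < 1 by move: c01; rewrite in_itv => /andP.
have d2f (t : R) : is_derive t 1 (derive1 f) (derive1 (derive1 f) t).
  by rewrite derive1E; exact: derivableP.
have [c2 _ f'c] := MVT c_gt0 (fun t _ => d2f t)
  (derivable_within_continuous (fun t _ => ddf t)).
have : k 1 - k 0 <= 0.
  rewrite kc subr0 mulr1.
  have : derive1 f c - a <= M * c by rewrite /a f'c subr0 ler_wpM2r // ltW.
  lra.
rewrite /k /a !fctE /= expr1n expr0n /= scaler0 /GRing.scale /= !mulr1; lra.
Qed.

Section ScaleInvariant.
Context {R : realType} {d : nat} {L : 'rV[R]_d -> R}.
Hypothesis hL2 : twice_differentiable_punctured L.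
Hypothesis hsc : scale_invariant L.

Lemma differentiable_grad_coord i y :
  y != 0 -> differentiable (fun z => grad L z 0 i) y.
Proof. by move=> /(hL2 _)[_ dg]; exact: differentiable_comp dg (differentiable_coord _ 0 i). Qed.

Lemma derive_scale_inv (c : R) y e : 0 < c -> y != 0 ->
  'D_e L (c *: y) = c^-1 * 'D_e L y.
Proof.
move=> c_gt0 y0; have cy0 : c *: y != 0 by rewrite scaler_eq0 gt_eqF.
have : c * 'D_e L (c *: y) = 1 * 'D_e L y.
  apply: derive_homog; [exact: (hL2 _ y0).1 | exact: (hL2 _ cy0).1 |].
  by near=> z; rewrite mul1r hsc //; near: z; exact: near_neq0.
by rewrite mul1r => <-; rewrite mulrA mulVf ?mul1r // gt_eqF.
Unshelve. all: by end_near.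
Qed.

Lemma hessian_scale_inv (c : R) y i j : 0 < c -> y != 0 ->
  hessian L (c *: y) i j = c^-2 * hessian L y i j.
Proof.
move=> c_gt0 y0; have cy0 : c *: y != 0 by rewrite scaler_eq0 gt_eqF.
have homog : c * 'D_(basis_vec R j) (fun z => grad L z 0 i) (c *: y) =
    c^-1 * 'D_(basis_vec R j) (fun z => grad L z 0 i) y.
  apply: derive_homog; [exact: differentiable_grad_coord..|].
  by near=> z; rewrite !mxE derive_scale_inv //; near: z; exact: near_neq0.
rewrite !mxE; apply: (mulfI (lt0r_neq0 c_gt0)); rewrite homog mulrA.
by rewrite expr2 invfM mulrA mulfV ?gt_eqF ?mul1r.
Unshelve. all: by end_near.
Qed.

Lemma is_derive_dir_hessian v y : y != 0 ->
  is_derive y v (fun z => 'D_v L z) (dotp v (v *m (hessian L y)^T)).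
Proof.
move=> y0.
have dgi i : is_derive y v (fun z => v 0 i * grad L z 0 i)
    (v 0 i * 'D_v (fun z => grad L z 0 i) y).
  apply: DeriveDef; first by apply: derivableM => //; exact/diff_derivable/differentiable_grad_coord.
  by apply: deriveMl; exact/diff_derivable/differentiable_grad_coord.
have := is_derive_sum dgi; rewrite fct_sumE => dsum.
have -> : dotp v (v *m (hessian L y)^T) =
    \sum_(i < d) v 0 i * 'D_v (fun z => grad L z 0 i) y.
  apply: eq_bigr => i _; rewrite derive_grad; last exact: differentiable_grad_coord.
  by congr (_ * _); rewrite !mxE; apply: eq_bigr => j _; rewrite !mxE.
apply: near_eq_is_derive dsum; near=> z.
rewrite derive_grad //; apply: (hL2 _ _).1; near: z; exact: near_neq0.
Unshelve. all: by end_near.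
Qed.

Lemma increment_le_line a v (M : R) :
  (forall t : R, a + t *: v != 0) ->
  (forall t : R, dotp v (v *m (hessian L (a + t *: v))^T) <= M) ->
  L (a + v) - L a <= dotp v (grad L a) + M / 2.
Proof.
move=> a_tv0 hess_le; pose phi t := L (a + t *: v).
have a0 : a != 0 by have := a_tv0 0; rewrite scale0r addr0.
have phi' : derive1 phi = fun t => 'D_v L (a + t *: v).
  by apply: funext => t; rewrite derive1E derive_line.
have := @taylor2_le _ phi M.
rewrite phi' /phi scale1r scale0r addr0 -derive_grad; last exact: (hL2 _ a0).1.
apply.
- by move=> t; rewrite derivable_line; exact/diff_derivable/(hL2 _ (a_tv0 t)).1.
- move=> t; rewrite (derivable_line (fun z => 'D_v L z)).
  exact: (is_derive_dir_hessian v _ (a_tv0 t)).(ex_derive).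
- move=> t; rewrite derive1E (derive_line (fun z => 'D_v L z)).
  by rewrite (is_derive_dir_hessian v _ (a_tv0 t)).(derive_val).
Qed.

Context {rho : R}.
Hypothesis hrho_ub : forall x : 'rV[R]_d, norm2 x = 1 -> opnorm2 (hessian L x) <= rho.

Lemma hessian_quad_le v y : y != 0 ->
  dotp v (v *m (hessian L y)^T) <= rho * norm2 v ^+ 2 / norm2 y ^+ 2.
Proof.
move=> y0; have y_gt0 := norm2_gt0 _ y0; set n := (norm2 y)^-1 *: y.
have y_n : y = norm2 y *: n by rewrite /n scalerA mulfV ?gt_eqF // scale1r.
have n0 : n != 0 by rewrite scaler_eq0 negb_or invr_eq0 gt_eqF.
have -> : (hessian L y)^T = (norm2 y)^-2 *: (hessian L n)^T.
  by apply/matrixP => i j; rewrite [LHS]mxE {1}y_n hessian_scale_inv // !mxE.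
rewrite -scalemxAr dotpZr mulrC ler_wpM2r ?invr_ge0 ?exprn_ge0 ?norm2_ge0 //.
apply: le_trans (quad_form_le_opnorm2 _ _) _.
by rewrite ler_wpM2r ?sqr_ge0 // hrho_ub // norm2_normalize.
Qed.

End ScaleInvariant.

Theorem mainTheorem4 (R : realType) (d : nat) (L : 'rV[R]_d -> R) (rho : R)
  (hL2 : twice_differentiable_punctured L)
  (hsc : scale_invariant L)
  (hrho_ub : forall x : 'rV[R]_d, norm2 x = 1 -> opnorm2 (hessian L x) <= rho)
  (hrho_att : exists2 x : 'rV[R]_d, norm2 x = 1 & opnorm2 (hessian L x) = rho)
  (x v : 'rV[R]_d) (hx : x != 0) (hxv : dotp x v = 0) :
  L (x + v) - L x <= dotp v (grad L x) + rho * norm2 v ^+ 2 / (2 * norm2 x ^+ 2).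
Proof.
have rho_ge0 : 0 <= rho.
  case: hrho_att => u u1 <-; rewrite -[opnorm2 _]mulr1 -u1.
  exact: le_trans (norm2_ge0 _) (norm2_mulmx_le _ u).
have x2_gt0 : 0 < norm2 x ^+ 2 by rewrite exprn_gt0 ?norm2_gt0.
have line_ge t : norm2 x ^+ 2 <= norm2 (x + t *: v) ^+ 2.
  by rewrite norm2_orthoD ?dotpZr ?hxv ?mulr0 // lerDl sqr_ge0.
have line_gt0 t : 0 < norm2 (x + t *: v) ^+ 2 := lt_le_trans x2_gt0 (line_ge t).
have line_neq0 t : x + t *: v != 0 by rewrite -norm2_eq0 -sqrf_eq0 gt_eqF.
rewrite invfM mulrA mulrAC; apply: increment_le_line => // t.
apply: le_trans (hessian_quad_le hL2 hsc hrho_ub v _ (line_neq0 t)) _.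
apply: ler_wpM2l; first by rewrite mulr_ge0 ?sqr_ge0.
by rewrite lef_pV2 ?posrE.
Qed.
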